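(* Let $\nu>0$, $b>0$ and let $f:\mathbb{R}\to\mathbb{R}$ be continuously differentiable with: $f(0)=f(a)=f(1)=0$ for some $a\in(0,1)$; $f(x)<0$ for $x\in(0,a)$ and $f(x)>0$ for $x\in(a,1)$; $f'(0)<0$, $f'(a)>0$, $f'(1)<0$; and $\int_0^1 f(v)\,dv\ge 0$. Let $\hat v:\mathbb{R}\to\mathbb{R}$ be a monotone increasing $C^2$ function with $\lim_{x\to-\infty}\hat v(x)=0$, $\lim_{x\to+\infty}\hat v(x)=1$, satisfying $c\hat v_x=\nu\hat v_{xx}+bf(\hat v)$ on $\mathbb{R}$ for some constant $c\in\mathbb{R}$. Then: (i) $\hat v_x^2(x)\le \frac{2b}{\nu}\int_{\hat v(x)}^1 f(v)\,dv$ for all $x\in\mathbb{R}$; in particular $\lim_{x\to+\infty}e^{-\alpha\frac{c}{\nu}x}\hat v_x^2(x)=0$ for all $\alpha\ge 0$. (ii) The function $x\mapsto e^{-2\frac{c}{\nu}x}\hat v_x^2(x)$ is increasing on $\{x\le \hat v^{-1}(a)\}$ and decreasing on $\{x\ge \hat v^{-1}(a)\}$; in particular $\lim_{x\to\pm\infty}e^{-\alpha\frac{c}{\nu}x}\hat v_x^2(x)=0$ for all $\alpha\in[0,2)$.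
   Context: $\hat v$ is a travelling wave of the reaction–diffusion equation $\partial_t v=\nu v_{xx}+bf(v)$ with wave speed $c$; under the assumption $\int_0^1 f\,dv\ge 0$ it is known that $c\ge 0$. *)

From Stdlib Require Import Reals.
From Coquelicot Require Import Coquelicot.
Open Scope R_scope.

Definition is_C1 (f : R -> R) : Prop :=
  forall x, ex_derive f x /\ continuous (Derive f) x.

Definition is_C2 (v : R -> R) : Prop :=
  forall x, ex_derive v x /\ ex_derive (Derive v) x /\
            continuous (Derive (Derive v)) x.

Definition wsq (alpha c nu : R) (v : R -> R) (x : R) : R :=
  exp (- alpha * (c / nu) * x) * (Derive v x) ^ 2.

From Stdlib Require Import Reals Lra.
From Coquelicot Require Import Coquelicot.
Open Scope R_scope.

(* The slope v' is nonnegative and, by the equation, |v''| <= K (v' + B); so ln (v' + B) is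
   Lipschitz and v' cannot stay large where v barely moves, whence v' -> 0 at both ends.
   Multiplying the equation by v' shows that E = nu/2 v'^2 - b \int_v^1 f satisfies E' = c v'^2,
   with E(+oo) = 0 and E(-oo) = -b \int_0^1 f <= 0.  If c < 0 this forces E = 0, hence v' = 0,
   which is absurd; so c >= 0, E increases to 0, and E <= 0 is (i).  For (ii),
   (e^{-2cx/nu} v'^2)' = -(2b/nu) e^{-2cx/nu} v' f(v) has the sign of -f(v), which changes at
   v = a; in particular this weighted square is bounded near -oo, and the remaining factor
   e^{(2-alpha)cx/nu} sends it to 0. *)

Lemma le_of_derive_nonneg (g dg : R -> R) (x y : R) :
  (forall t, is_derive g t (dg t)) -> (forall t, x <= t <= y -> 0 <= dg t) ->
  x <= y -> g x <= g y.
Proof.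
intros Hd Hpos Hxy.
destruct (MVT_gen g x y dg) as [z [Hz Hinc]].
- intros t _. apply Hd.
- intros t _. apply continuity_pt_filterlim, (ex_derive_continuous (V := R_NormedModule)).
  exists (dg t). apply Hd.
- rewrite Rmin_left, Rmax_right in Hz by lra.
  assert (0 <= dg z) by (apply Hpos; lra). nra.
Qed.

Lemma increasing_of_derive_nonneg (g dg : R -> R) :
  (forall t, is_derive g t (dg t)) -> (forall t, 0 <= dg t) -> increasing g.
Proof.
intros Hd Hpos x y. apply (le_of_derive_nonneg g dg x y Hd). intros t _. apply Hpos.
Qed.

Lemma derive_nonneg_of_increasing (g dg : R -> R) :
  (forall t, is_derive g t (dg t)) -> increasing g -> forall x, 0 <= dg x.
Proof.
intros Hd Hg x.
set (pr := fun t => ex_derive_Reals_0 g t (ex_intro _ (dg t) (Hd t))).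
rewrite <- (is_derive_unique g x (dg x) (Hd x)), <- (Derive_Reals g x (pr x)).
now apply nonneg_derivative_0.
Qed.

Lemma increasing_le_lim_p_infty (g : R -> R) (l : R) :
  increasing g -> is_lim g p_infty l -> forall x, g x <= l.
Proof.
intros Hg Hl x.
apply (is_lim_le_loc (fun _ => g x) g p_infty (g x) l); [|apply is_lim_const|exact Hl].
exists x. intros y Hy. apply Hg. lra.
Qed.

Lemma increasing_ge_lim_m_infty (g : R -> R) (l : R) :
  increasing g -> is_lim g m_infty l -> forall x, l <= g x.
Proof.
intros Hg Hl x.
apply (is_lim_le_loc g (fun _ => g x) m_infty l (g x)); [|exact Hl|apply is_lim_const].
exists x. intros y Hy. apply Hg. lra.
Qed.

Lemma is_lim_sq_0 (g : R -> R) (x : Rbar) :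
  is_lim g x 0 -> is_lim (fun y => g y ^ 2) x 0.
Proof.
intros Hg.
pose proof (is_lim_mult g g x 0 0 Hg Hg I) as Hsq. simpl in Hsq. rewrite Rmult_0_r in Hsq.
apply (is_lim_ext (fun y => g y * g y)); [intro y; ring|exact Hsq].
Qed.

Lemma is_lim_exp_scal_m_infty (k : R) :
  0 < k -> is_lim (fun x => exp (k * x)) m_infty 0.
Proof.
intros Hk. apply (is_lim_comp exp (fun x => k * x) m_infty 0 m_infty is_lim_exp_m).
- apply is_lim_spec. intros M. exists (M / k). intros x Hx.
  apply (Rmult_lt_compat_l k) in Hx; [|exact Hk].
  replace (k * (M / k)) with M in Hx by (field; lra). exact Hx.
- exists 0. intros y _. discriminate.
Qed.

Lemma is_derive_RInt_lower (f : R -> R) (b s : R) :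
  (forall t, continuous f t) -> is_derive (fun s => RInt f s b) s (- f s).
Proof.
intros Hf. apply (is_derive_RInt' f (fun s => RInt f s b) s b); [|apply Hf].
apply filter_forall. intro t.
apply (RInt_correct (V := R_CompleteNormedModule)),
  (ex_RInt_continuous (V := R_CompleteNormedModule)).
intros; apply Hf.
Qed.

Section SlopeDecay.

Context {v w w' : R -> R} {K B : R}
  (Hv : forall t, is_derive v t (w t)) (Hw : forall t, is_derive w t (w' t))
  (Hw0 : forall t, 0 <= w t) (HK : 0 < K) (HB : 0 < B)
  (Hw' : forall t, Rabs (w' t) <= K * (w t + B)).

(* The bound on [w'] makes [ln (w + B)] K-Lipschitz. *)
Lemma slope_growth_lower_bound x t :
  x <= t -> (w x + B) * exp (- (K * (t - x))) <= w t + B.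
Proof.
intros Hxt.
assert (Hgrowth : (w x + B) * exp (K * x) <= (w t + B) * exp (K * t)).
{ apply (le_of_derive_nonneg (fun s => (w s + B) * exp (K * s))
          (fun s => (w' s + K * (w s + B)) * exp (K * s))); [| |exact Hxt].
  - intro s. auto_derive; [exists (w' s); apply Hw|].
    change (Derive (fun y => w y)) with (Derive w).
    rewrite (is_derive_unique w s (w' s) (Hw s)). ring.
  - intros s _. apply Rmult_le_pos; [|apply Rlt_le, exp_pos].
    pose proof (proj1 (Rabs_le_between _ _) (Hw' s)). lra. }
assert (Hexp : exp (- (K * (t - x))) * exp (K * t) = exp (K * x))
  by (rewrite <- exp_plus; f_equal; ring).
pose proof (exp_pos (K * t)). pose proof (exp_pos (- (K * (t - x)))). nra.
Qed.

Lemma slope_le_increment x h : 0 < h -> K * h <= 1 / 2 ->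
  h * w x <= 2 * (v (x + h) - v x) + 2 * K * B * h ^ 2.
Proof.
intros Hh HKh.
destruct (MVT_gen v x (x + h) w) as [z [Hz Hinc]].
- intros t _. apply Hv.
- intros t _. apply continuity_pt_filterlim, (ex_derive_continuous (V := R_NormedModule)).
  exists (w t). apply Hv.
- rewrite Rmin_left, Rmax_right in Hz by lra.
  assert (Hdecay : (w x + B) * (1 - K * h) <= w z + B).
  { apply Rle_trans with ((w x + B) * exp (- (K * (z - x))));
      [|apply slope_growth_lower_bound; lra].
    apply Rmult_le_compat_l; [pose proof (Hw0 x); lra|].
    pose proof (exp_ineq1_le (- (K * (z - x)))). nra. }
  assert (Hwx : w x <= 2 * w z + 2 * K * B * h) by (pose proof (Hw0 x); nra).
  replace (x + h - x) with h in Hinc by ring. rewrite Hinc. nra.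
Qed.

Lemma slope_lim_p_infty {l : R} : is_lim v p_infty l -> is_lim w p_infty 0.
Proof.
intros Hl. apply is_lim_spec in Hl. apply is_lim_spec. intros [eps Heps]. simpl.
set (h := eps / (2 * K * (2 * B + eps))).
assert (Hh : 0 < h) by (apply Rdiv_lt_0_compat; nra).
assert (Hh_def : h * (2 * K * (2 * B + eps)) = eps) by (unfold h; field; nra).
assert (HKh : K * h <= 1 / 2) by nra.
assert (HKBh : 2 * K * B * h <= eps / 2) by nra.
destruct (Hl (mkposreal (eps * h / 8) ltac:(nra))) as [M HM]. simpl in HM.
exists M. intros x Hx.
rewrite Rminus_0_r, Rabs_pos_eq by apply Hw0.
pose proof (slope_le_increment x h Hh HKh) as Hinc.
pose proof (proj1 (Rabs_lt_between _ _) (HM x Hx)) as Hvx.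
pose proof (proj1 (Rabs_lt_between _ _) (HM (x + h) ltac:(lra))) as Hvxh.
apply (Rmult_lt_reg_l h); [exact Hh|]. nra.
Qed.

End SlopeDecay.

Lemma slope_lim_m_infty (v w w' : R -> R) (K B l : R) :
  (forall t, is_derive v t (w t)) -> (forall t, is_derive w t (w' t)) ->
  (forall t, 0 <= w t) -> 0 < K -> 0 < B ->
  (forall t, Rabs (w' t) <= K * (w t + B)) ->
  is_lim v m_infty l -> is_lim w m_infty 0.
Proof.
intros Hv Hw Hw0 HK HB Hw' Hl.
assert (Hopp : is_lim (fun x => - x) m_infty p_infty)
  by apply (is_lim_opp _ _ _ (is_lim_id m_infty)).
assert (Hopp' : is_lim (fun x => - x) p_infty m_infty)
  by apply (is_lim_opp _ _ _ (is_lim_id p_infty)).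
assert (Hwr : is_lim (fun x => w (- x)) p_infty 0).
{ eapply (slope_lim_p_infty (v := fun x => - v (- x)) (w' := fun x => - w' (- x))
    (K := K) (B := B)).
  - intro t. auto_derive; [exists (w (- t)); apply Hv|].
    change (Derive (fun y => v y)) with (Derive v).
    rewrite (is_derive_unique v (- t) (w (- t)) (Hv (- t))). ring.
  - intro t. auto_derive; [exists (w' (- t)); apply Hw|].
    change (Derive (fun y => w y)) with (Derive w).
    rewrite (is_derive_unique w (- t) (w' (- t)) (Hw (- t))). ring.
  - intro t. apply Hw0.
  - exact HK.
  - exact HB.
  - intro t. rewrite Rabs_Ropp. apply Hw'.
  - apply (is_lim_opp (fun x => v (- x)) p_infty l).
    apply (is_lim_comp v (fun x => - x) p_infty l m_infty Hl Hopp').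
    exists 0. intros; discriminate. }
apply (is_lim_ext (fun x => w (- - x))); [intro; now rewrite Ropp_involutive|].
apply (is_lim_comp (fun x => w (- x)) (fun x => - x) m_infty 0 p_infty Hwr Hopp).
exists 0. intros; discriminate.
Qed.

Set Implicit Arguments.

Record bistable_wave (nu b c a : R) (f v : R -> R) : Prop := {
  nu_pos : 0 < nu;
  b_pos : 0 < b;
  a_pos : 0 < a;
  f_continuous : forall s, continuous f s;
  f_nonpos_below : forall s, 0 <= s <= a -> f s <= 0;
  f_nonneg_above : forall s, a <= s <= 1 -> 0 <= f s;
  f_mass_nonneg : 0 <= RInt f 0 1;
  v_C2 : is_C2 v;
  v_increasing : increasing v;
  v_lim_m_infty : is_lim v m_infty 0;
  v_lim_p_infty : is_lim v p_infty 1;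
  wave_ode : forall x, c * Derive v x = nu * Derive (Derive v) x + b * f (v x)
}.

Unset Implicit Arguments.

Lemma wsq_nonneg (alpha c nu : R) (v : R -> R) (x : R) : 0 <= wsq alpha c nu v x.
Proof. apply Rmult_le_pos; [apply Rlt_le, exp_pos|apply pow2_ge_0]. Qed.

Lemma wsq_eq_exp_mul (alpha c nu : R) (v : R -> R) (x : R) :
  wsq alpha c nu v x = exp ((2 - alpha) * (c / nu) * x) * wsq 2 c nu v x.
Proof. unfold wsq. rewrite <- Rmult_assoc, <- exp_plus. f_equal. f_equal. ring. Qed.

Section BistableWave.

Context {nu b c a : R} {f v : R -> R} (W : bistable_wave nu b c a f v).

Lemma wave_derive_correct x : is_derive v x (Derive v x).
Proof. apply Derive_correct, (v_C2 W). Qed.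

Lemma wave_derive2_correct x : is_derive (Derive v) x (Derive (Derive v) x).
Proof. apply Derive_correct, (v_C2 W). Qed.

Lemma wave_slope_nonneg x : 0 <= Derive v x.
Proof. exact (derive_nonneg_of_increasing v (Derive v) wave_derive_correct (v_increasing W) x). Qed.

Lemma wave_range x : 0 <= v x <= 1.
Proof.
split.
- exact (increasing_ge_lim_m_infty v 0 (v_increasing W) (v_lim_m_infty W) x).
- exact (increasing_le_lim_p_infty v 1 (v_increasing W) (v_lim_p_infty W) x).
Qed.

Lemma wave_slope_derive_bound : exists K B, 0 < K /\ 0 < B /\
  forall t, Rabs (Derive (Derive v) t) <= K * (Derive v t + B).
Proof.
destruct (continuity_ab_maj (fun s => Rabs (f s)) 0 1) as [s0 [Hmax _]]; [lra| |].
{ intros s _. apply continuity_pt_filterlim, continuous_Rabs_comp, (f_continuous W). }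
pose proof (nu_pos W) as Hnu. pose proof (b_pos W) as Hb.
set (M := Rabs (f s0)).
assert (HM : 0 <= M) by apply Rabs_pos.
exists (Rabs c / nu + 1), (b * M / nu + 1).
split; [pose proof (Rabs_pos c); apply Rplus_le_lt_0_compat; [apply Rdiv_le_0_compat|]; lra|].
split; [apply Rplus_le_lt_0_compat; [apply Rdiv_le_0_compat|]; nra|].
intro t.
assert (Hfv : Rabs (f (v t)) <= M) by (apply Hmax, wave_range).
pose proof (wave_slope_nonneg t) as Hw.
assert (Hscaled : nu * Rabs (Derive (Derive v) t) <= Rabs c * Derive v t + b * M).
{ rewrite <- (Rabs_pos_eq nu) at 1 by lra. rewrite <- Rabs_mult.
  replace (nu * Derive (Derive v) t) with (c * Derive v t + - (b * f (v t)))
    by (rewrite (wave_ode W t); ring).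
  eapply Rle_trans; [apply Rabs_triang|].
  rewrite Rabs_Ropp, !Rabs_mult, (Rabs_pos_eq (Derive v t)), (Rabs_pos_eq b) by lra.
  apply Rplus_le_compat_l, Rmult_le_compat_l; lra. }
assert (Hbound : Rabs (Derive (Derive v) t) <= Rabs c / nu * Derive v t + b * M / nu).
{ apply (Rmult_le_reg_l nu); [lra|].
  replace (nu * (Rabs c / nu * Derive v t + b * M / nu)) with (Rabs c * Derive v t + b * M)
    by (field; lra).
  exact Hscaled. }
assert (0 <= Rabs c / nu) by (apply Rdiv_le_0_compat; [apply Rabs_pos|lra]).
assert (0 <= b * M / nu) by (apply Rdiv_le_0_compat; nra).
nra.
Qed.

Lemma wave_slope_lim_p_infty : is_lim (Derive v) p_infty 0.
Proof.
destruct wave_slope_derive_bound as (K & B & HK & HB & Hbound).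
exact (slope_lim_p_infty wave_derive_correct wave_derive2_correct wave_slope_nonneg HK HB Hbound
  (v_lim_p_infty W)).
Qed.

Lemma wave_slope_lim_m_infty : is_lim (Derive v) m_infty 0.
Proof.
destruct wave_slope_derive_bound as (K & B & HK & HB & Hbound).
exact (slope_lim_m_infty v (Derive v) (Derive (Derive v)) K B 0 wave_derive_correct
  wave_derive2_correct wave_slope_nonneg HK HB Hbound (v_lim_m_infty W)).
Qed.

Definition wave_energy x := nu / 2 * Derive v x ^ 2 - b * RInt f (v x) 1.

Lemma is_derive_wave_energy x : is_derive wave_energy x (c * Derive v x ^ 2).
Proof.
pose proof (nu_pos W) as Hnu. pose proof (f_continuous W) as Hf.
unfold wave_energy. auto_derive.
- split; [exists (Derive (Derive v) x); apply wave_derive2_correct|].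
  split; [exists (Derive v x); apply wave_derive_correct|].
  split; [apply (ex_RInt_continuous (V := R_CompleteNormedModule)); intros; apply Hf|].
  split; [|exact I]. apply filter_forall. intro s. apply continuity_pt_filterlim, Hf.
- change (Derive (fun y => Derive v y)) with (Derive (Derive v)).
  change (Derive (fun y => v y)) with (Derive v).
  replace (Derive (Derive v) x) with ((c * Derive v x - b * f (v x)) / nu)
    by (rewrite (wave_ode W x); field; lra).
  field. lra.
Qed.

Lemma wave_energy_lim (x : Rbar) (l : R) :
  is_lim v x l -> is_lim (Derive v) x 0 -> is_lim wave_energy x (- (b * RInt f l 1)).
Proof.
intros Hv Hw.
pose proof (is_lim_scal_l _ (nu / 2) _ _ (is_lim_sq_0 _ _ Hw)) as Hkin.
assert (HG : continuous (fun s => b * RInt f s 1) l).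
{ apply (ex_derive_continuous (V := R_NormedModule)). exists (b * - f l).
  apply is_derive_scal, is_derive_RInt_lower, (f_continuous W). }
pose proof (is_lim_comp_continuous _ _ _ _ Hv HG) as Hpot.
simpl in Hkin. replace (- (b * RInt f l 1)) with (nu / 2 * 0 - b * RInt f l 1) by ring.
exact (is_lim_minus' _ _ _ _ _ Hkin Hpot).
Qed.

Lemma wave_energy_lim_p_infty : is_lim wave_energy p_infty 0.
Proof.
pose proof (wave_energy_lim _ _ (v_lim_p_infty W) wave_slope_lim_p_infty) as H.
rewrite (RInt_point (V := R_CompleteNormedModule)), Rmult_0_r, Ropp_0 in H. exact H.
Qed.

Lemma wave_energy_lim_m_infty : is_lim wave_energy m_infty (- (b * RInt f 0 1)).
Proof. exact (wave_energy_lim _ _ (v_lim_m_infty W) wave_slope_lim_m_infty). Qed.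

Lemma wave_speed_nonneg : 0 <= c.
Proof.
destruct (Rle_lt_dec 0 c) as [Hc|Hc]; [exact Hc|exfalso].
pose proof (b_pos W) as Hb. pose proof (f_mass_nonneg W) as Hmass.
assert (Hdecr : increasing (fun x => - wave_energy x)).
{ apply (increasing_of_derive_nonneg _ (fun t => - (c * Derive v t ^ 2))).
  - intro t. apply (is_derive_opp wave_energy), is_derive_wave_energy.
  - intro t. pose proof (pow2_ge_0 (Derive v t)). nra. }
assert (Hzero : forall x, wave_energy x = 0).
{ intro x.
  pose proof (increasing_le_lim_p_infty _ (- 0) Hdecr
    (is_lim_opp _ _ _ wave_energy_lim_p_infty) x).
  pose proof (increasing_ge_lim_m_infty _ (- - (b * RInt f 0 1)) Hdecr
    (is_lim_opp _ _ _ wave_energy_lim_m_infty) x).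
  nra. }
assert (Hflat : forall x, Derive v x = 0).
{ intro x.
  assert (Hderive0 : c * Derive v x ^ 2 = 0).
  { rewrite <- (is_derive_unique _ _ _ (is_derive_wave_energy x)).
    apply is_derive_unique.
    apply (is_derive_ext (fun _ => 0)); [intro; symmetry; apply Hzero|].
    exact (is_derive_const (K := R_AbsRing) (V := R_NormedModule) 0 x). }
  apply Rmult_integral in Hderive0 as [|Hsq]; [lra|]. apply Rsqr_eq_0. now rewrite Rsqr_pow2. }
assert (Hvdecr : increasing (fun x => - v x)).
{ apply (increasing_of_derive_nonneg _ (fun t => - Derive v t)).
  - intro t. apply (is_derive_opp v), wave_derive_correct.
  - intro t. rewrite Hflat. lra. }
pose proof (increasing_le_lim_p_infty _ (- 1) Hvdecr (is_lim_opp _ _ _ (v_lim_p_infty W)) 0).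
pose proof (increasing_ge_lim_m_infty _ (- 0) Hvdecr (is_lim_opp _ _ _ (v_lim_m_infty W)) 0).
lra.
Qed.

Lemma wave_energy_increasing : increasing wave_energy.
Proof.
apply (increasing_of_derive_nonneg _ _ is_derive_wave_energy).
intro t. apply Rmult_le_pos; [apply wave_speed_nonneg|apply pow2_ge_0].
Qed.

Lemma wave_slope_sq_le x : Derive v x ^ 2 <= 2 * b / nu * RInt f (v x) 1.
Proof.
pose proof (nu_pos W) as Hnu.
pose proof (increasing_le_lim_p_infty _ _ wave_energy_increasing wave_energy_lim_p_infty x) as Hle.
unfold wave_energy in Hle.
replace (Derive v x ^ 2) with (2 / nu * (nu / 2 * Derive v x ^ 2)) by (field; lra).
replace (2 * b / nu * RInt f (v x) 1) with (2 / nu * (b * RInt f (v x) 1)) by (field; lra).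
apply Rmult_le_compat_l; [apply Rlt_le, Rdiv_lt_0_compat|]; lra.
Qed.

Lemma is_derive_wsq2 x : is_derive (wsq 2 c nu v) x
  (2 * b / nu * (exp (- (2) * (c / nu) * x) * Derive v x) * - f (v x)).
Proof.
pose proof (nu_pos W) as Hnu.
unfold wsq. auto_derive; [exists (Derive (Derive v) x); apply wave_derive2_correct|].
change (Derive (fun y => Derive v y)) with (Derive (Derive v)).
replace (Derive (Derive v) x) with ((c * Derive v x - b * f (v x)) / nu)
  by (rewrite (wave_ode W x); field; lra).
field. lra.
Qed.

Lemma wsq2_derive_factor_nonneg x :
  0 <= 2 * b / nu * (exp (- (2) * (c / nu) * x) * Derive v x).
Proof.
apply Rmult_le_pos.
- apply Rlt_le, Rdiv_lt_0_compat; [apply Rmult_lt_0_compat; [lra|apply (b_pos W)]|apply (nu_pos W)].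
- apply Rmult_le_pos; [apply Rlt_le, exp_pos|apply wave_slope_nonneg].
Qed.

Lemma wsq2_le_below x y : x <= y -> v y <= a -> wsq 2 c nu v x <= wsq 2 c nu v y.
Proof.
intros Hxy Hvy. apply (le_of_derive_nonneg _ _ x y is_derive_wsq2); [|exact Hxy].
intros t Ht.
assert (Hft : f (v t) <= 0).
{ apply (f_nonpos_below W). split; [apply wave_range|].
  apply Rle_trans with (v y); [apply (v_increasing W)|]; lra. }
pose proof (wsq2_derive_factor_nonneg t).
apply Rmult_le_pos; lra.
Qed.

Lemma wsq2_le_above x y : a <= v x -> x <= y -> wsq 2 c nu v y <= wsq 2 c nu v x.
Proof.
intros Hvx Hxy.
enough (- wsq 2 c nu v x <= - wsq 2 c nu v y) by lra.
apply (le_of_derive_nonneg _ _ x y (fun t => is_derive_opp _ t _ (is_derive_wsq2 t))); [|exact Hxy].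
intros t Ht.
assert (Hft : 0 <= f (v t)).
{ apply (f_nonneg_above W). split; [|apply wave_range].
  apply Rle_trans with (v x); [|apply (v_increasing W)]; lra. }
pose proof (wsq2_derive_factor_nonneg t).
rewrite Ropp_mult_distr_r, Ropp_involutive.
apply Rmult_le_pos; lra.
Qed.

Lemma wsq_lim_p_infty alpha : 0 <= alpha -> is_lim (wsq alpha c nu v) p_infty 0.
Proof.
intros Halpha.
apply (is_lim_le_le_loc (fun _ => 0) (fun x => Derive v x ^ 2));
  [|apply is_lim_const|apply is_lim_sq_0, wave_slope_lim_p_infty].
exists 0. intros x Hx. split; [apply wsq_nonneg|].
assert (Hweight : exp (- alpha * (c / nu) * x) <= 1).
{ rewrite <- exp_0.
  assert (0 <= c / nu) by (apply Rdiv_le_0_compat; [apply wave_speed_nonneg|apply (nu_pos W)]).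
  assert (0 <= alpha * (c / nu)) by (apply Rmult_le_pos; lra).
  assert (Hexponent : - alpha * (c / nu) * x <= 0) by nra.
  destruct (Rle_lt_or_eq_dec _ _ Hexponent) as [Hlt| ->]; [|lra].
  now apply Rlt_le, exp_increasing. }
unfold wsq. pose proof (pow2_ge_0 (Derive v x)). nra.
Qed.

Lemma wsq_lim_m_infty alpha : alpha < 2 -> is_lim (wsq alpha c nu v) m_infty 0.
Proof.
intros Halpha. pose proof (nu_pos W) as Hnu.
destruct (Rle_lt_or_eq_dec 0 c wave_speed_nonneg) as [Hc|Hc0].
- set (k := (2 - alpha) * (c / nu)).
  assert (Hk : 0 < k) by (apply Rmult_lt_0_compat; [lra|apply Rdiv_lt_0_compat; lra]).
  destruct (proj2 (is_lim_spec _ _ _) (v_lim_m_infty W) (mkposreal a (a_pos W))) as [X HX].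
  assert (HvX : v (X - 1) <= a).
  { pose proof (HX (X - 1) ltac:(lra)) as Hclose. simpl in Hclose.
    apply Rabs_lt_between in Hclose. lra. }
  pose proof (is_lim_scal_l _ (wsq 2 c nu v (X - 1)) _ _ (is_lim_exp_scal_m_infty k Hk)) as Hbound.
  simpl in Hbound. rewrite Rmult_0_r in Hbound.
  refine (is_lim_le_le_loc (fun _ => 0) _ _ _ _ _ (is_lim_const 0 m_infty) Hbound).
  exists (X - 1). intros x Hx. split; [apply wsq_nonneg|].
  rewrite wsq_eq_exp_mul, Rmult_comm. fold k.
  apply Rmult_le_compat_r; [apply Rlt_le, exp_pos|].
  apply wsq2_le_below; lra.
- apply (is_lim_ext (fun x => Derive v x ^ 2)); [|apply is_lim_sq_0, wave_slope_lim_m_infty].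
  intro x. unfold wsq. rewrite <- Hc0. replace (- alpha * (0 / nu) * x) with 0 by (field; lra).
  rewrite exp_0. ring.
Qed.

End BistableWave.

Theorem lemma1p1 (nu b c a : R) (f v : R -> R)
  (Hnu : 0 < nu) (Hb : 0 < b)
  (Hf : is_C1 f)
  (Ha : 0 < a < 1)
  (Hf0 : f 0 = 0) (Hfa : f a = 0) (Hf1 : f 1 = 0)
  (Hneg : forall x, 0 < x < a -> f x < 0)
  (Hpos : forall x, a < x < 1 -> 0 < f x)
  (Hd0 : Derive f 0 < 0) (Hda : 0 < Derive f a) (Hd1 : Derive f 1 < 0)
  (Hint : 0 <= RInt f 0 1)
  (Hv : is_C2 v)
  (Hmono : forall x y, x <= y -> v x <= v y)
  (Hlm : is_lim v m_infty 0) (Hlp : is_lim v p_infty 1)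
  (Hode : forall x, c * Derive v x = nu * Derive (Derive v) x + b * f (v x)) :
  (* (i) *)
  ((forall x, (Derive v x) ^ 2 <= 2 * b / nu * RInt f (v x) 1) /\
   (forall alpha, 0 <= alpha -> is_lim (wsq alpha c nu v) p_infty 0)) /\
  (* (ii) ; x0 is (any) point with v x0 = a, i.e. x0 = v^{-1}(a) *)
  ((forall x0, v x0 = a ->
      (forall x y, x <= y <= x0 -> wsq 2 c nu v x <= wsq 2 c nu v y) /\
      (forall x y, x0 <= x <= y -> wsq 2 c nu v y <= wsq 2 c nu v x)) /\
   (forall alpha, 0 <= alpha < 2 ->
      is_lim (wsq alpha c nu v) p_infty 0 /\
      is_lim (wsq alpha c nu v) m_infty 0)).
Proof.
assert (W : bistable_wave nu b c a f v).
{ constructor; try assumption; try lra.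
  - intro s. apply (ex_derive_continuous (V := R_NormedModule)), Hf.
  - intros s Hs. destruct (Req_dec s 0) as [->|]; [lra|].
    destruct (Req_dec s a) as [->|]; [lra|]. apply Rlt_le, Hneg. lra.
  - intros s Hs. destruct (Req_dec s a) as [->|]; [lra|].
    destruct (Req_dec s 1) as [->|]; [lra|]. apply Rlt_le, Hpos. lra. }
split; [split|split].
- exact (wave_slope_sq_le W).
- intros alpha Halpha. exact (wsq_lim_p_infty W alpha Halpha).
- intros x0 Hx0. split.
  + intros x y Hxy. apply (wsq2_le_below W); [lra|]. rewrite <- Hx0. apply Hmono. lra.
  + intros x y Hxy. apply (wsq2_le_above W); [|lra]. rewrite <- Hx0. apply Hmono. lra.
- intros alpha Halpha. split.
  + exact (wsq_lim_p_infty W alpha (proj1 Halpha)).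
  + exact (wsq_lim_m_infty W alpha (proj2 Halpha)).
Qed.
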